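(* Let $m\ge 2$, let $n_1,\dots,n_m\ge 4$ be even, and let $\mathcal{C}=\mathcal{C}(C_{n_1},\dots,C_{n_m})$ be the even chain cycle. Then the vertex cover number of its strong resolving graph is $$\alpha(\mathcal{C}_{SR})=1+\sum_{i=1}^{m}\frac{n_i-2}{2}.$$
   Context: Let $C_{n_1},\dots,C_{n_m}$ be pairwise disjoint cycles, $V(C_{n_i})=\{v^i_1,\dots,v^i_{n_i}\}$ with $v^i_j$ adjacent to $v^i_{j+1}$ (indices mod $n_i$). The even chain cycle (all $n_i$ even) is obtained by identifying $v^i_{n_i/2+1}$ with $v^{i+1}_1$ for $i=1,\dots,m-1$. A vertex $u$ is maximally distant from $v$ if every neighbor $w$ of $u$ satisfies $d(v,w)\le d(u,v)$; $u,v$ are mutually maximally distant if each is maximally distant from the other. The strong resolving graph $G_{SR}$ of a connected graph $G$ has vertex set $V(G)$, with $u,v$ adjacent iff they are mutually maximally distant in $G$. $\alpha(H)$ denotes the minimum size of a vertex cover of $H$. *)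

From mathcomp Require Import all_boot.
Set Implicit Arguments. Unset Strict Implicit. Unset Printing Implicit Defensive.

Fixpoint within (T : finType) (e : rel T) (k : nat) (u v : T) : bool :=
  (u == v) ||
  (match k with
   | 0 => false
   | k'.+1 => [exists w, e u w && within e k' w v]
   end).

(* graph distance (for connected graphs on T it is < #|T|): least k with a
   walk of length <= k *)
Definition dist (T : finType) (e : rel T) (u v : T) : nat :=
  find (fun k => within e k u v) (iota 0 #|T|).

Definition max_distant (T : finType) (e : rel T) (u v : T) : bool :=
  [forall w, e u w ==> (dist e v w <= dist e u v)].

Definition mutually_max_distant (T : finType) (e : rel T) (u v : T) : bool :=
  max_distant e u v && max_distant e v u.

Definition strong_resolving_graph (T : finType) (e : rel T) : rel T :=
  fun u v => (u != v) && mutually_max_distant e u v.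

Definition vertex_cover (T : finType) (e : rel T) (S : {set T}) : bool :=
  [forall x, forall y, e x y ==> (x \in S) || (y \in S)].

Definition vertex_cover_number (T : finType) (e : rel T) : nat :=
  \big[minn/#|T|]_(S : {set T} | vertex_cover e S) #|S|.

(* Cycles are indexed i = 0..m-1 (paper's i+1) and the vertices of cycle i are
   (i, j), j = 0..n i - 1 (paper's v^{i+1}_{j+1}).  The paper identifies
   v^i_{n_i/2+1} with v^{i+1}_1, i.e. here (i, n i ./2) with (i+1, 0) for
   i+1 < m.  We take (i+1, 0) as the representative of that class. *)

Definition Kbound (m : nat) (n : nat -> nat) : nat := \max_(i < m) n i.

Definition raw_vtx (m : nat) (n : nat -> nat) := ('I_m * 'I_(Kbound m n))%type.

Definition toN m n (p : raw_vtx m n) : nat * nat := (nat_of_ord p.1, nat_of_ord p.2).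

Definition repn (m : nat) (n : nat -> nat) (a : nat * nat) : nat * nat :=
  if (a.2 == (n a.1)./2) && (a.1.+1 < m) then (a.1.+1, 0) else a.

Definition is_vtx m n (p : raw_vtx m n) : bool :=
  (p.2 < n p.1) && ~~ ((nat_of_ord p.2 == (n p.1)./2) && (p.1.+1 < m)).

Definition chain_vtx (m : nat) (n : nat -> nat) :=
  {p : raw_vtx m n | is_vtx p}.

Definition cyc_adj (n : nat -> nat) (a b : nat * nat) : bool :=
  [&& a.1 == b.1, a.2 < n a.1, b.2 < n b.1 &
      (b.2 == a.2.+1 %% n a.1) || (a.2 == b.2.+1 %% n a.1)].

Definition chain_adj (m : nat) (n : nat -> nat) : rel (chain_vtx m n) :=
  fun u v => [exists a : raw_vtx m n, exists b : raw_vtx m n,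
    [&& cyc_adj n (toN a) (toN b),
        repn m n (toN a) == toN (val u) &
        repn m n (toN b) == toN (val v)]].

From mathcomp Require Import all_boot all_order zify.
Set Implicit Arguments. Unset Strict Implicit. Unset Printing Implicit Defensive.

(* A vertex of the chain is described by coordinates (c, p): cycle c < m,
   position p < n_c, the exit (c, n_c/2) of cycle c being identified with the
   entry (c+1, 0) of the next cycle.  An explicit formula [cdist] (cyclic distance inside a cycle,
      difference of the distances to the origin (0,0) across cycles) changes
      by at most one along an edge and drops by one along some edge towards
      any target; a general lemma, [dist_potential], shows that such a
      potential is the graph distance.
   2. Mutual maximal distance.  Call inner the origin and the vertices (c, p)
      with 0 < p < n_c/2.  An inner vertex and its antipode (the opposite
      vertex of its cycle, or the far end of the chain for the origin) are
      mutually maximally distant, whereas two non-inner vertices never are: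
      one of them has a neighbour farther from the other.
   3. Counting.  Hence the inner vertices form a vertex cover of the strong
      resolving graph that is matched injectively into its complement; the
      general lemma [vertex_cover_number_matching] gives
      alpha = #inner = 1 + sum_i (n_i - 2)/2. *)

Lemma find_iota_geq x s N :
  s <= x -> x < s + N -> find (fun k => x <= k) (iota s N) = x - s.
Proof.
elim: N s => [|N IH] s le_sx lt_xsN /=; first lia.
by case: (leqP x s) => [|lt_sx]; [lia | rewrite IH; lia].
Qed.

Section DistanceFromPotential.
Variables (T : finType) (e : rel T) (d : T -> T -> nat).
Hypothesis d_self : forall v, d v v = 0.
Hypothesis d_step : forall u w v, e u w -> d u v <= (d w v).+1.
Hypothesis d_descent : forall u v, u != v -> exists2 w, e u w & (d w v).+1 = d u v.

Lemma within_potential k u v : within e k u v = (d u v <= k).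
Proof.
elim: k u => [|k IH] u /=.
  rewrite orbF; have [->|ne_uv] := eqVneq u v; first by rewrite d_self.
  by have [w _ <-] := d_descent ne_uv.
apply/idP/idP.
  case/orP => [/eqP ->|/existsP [w /andP [e_uw]]]; first by rewrite d_self.
  by rewrite IH => le_wk; apply: leq_trans (d_step v e_uw) _.
have [-> //|ne_uv] := eqVneq u v.
have [w e_uw <-] := d_descent ne_uv; rewrite ltnS => le_wk.
by apply/existsP; exists w; rewrite e_uw IH.
Qed.

(* Along a descending walk every value [0 .. d u v] is attained, so [d] is
   bounded by the number of vertices. *)
Lemma potential_lt_card u v : d u v < #|T|.
Proof.
have attained j u' : d u' v = j -> forall k, k <= j -> exists w, d w v = k.
  elim: j u' => [|j IH] u' d_u'.
    by move=> k; rewrite leqn0 => /eqP ->; exists u'.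
  move=> k; rewrite leq_eqVlt => /orP [/eqP ->|]; first by exists u'.
  have [eq_u'v|ne] := eqVneq u' v; first by rewrite eq_u'v d_self in d_u'.
  have [w _ d_w] := d_descent ne; rewrite ltnS; apply: IH.
  by apply: succn_inj; rewrite -d_u' -d_w.
have sub : {subset iota 0 (d u v).+1 <= map (d^~ v) (enum T)}.
  move=> k; rewrite mem_iota add0n => /(attained _ u erefl) [w <-].
  by apply: map_f; rewrite mem_enum.
by have := uniq_leq_size (iota_uniq 0 _) sub; rewrite size_iota size_map -cardE.
Qed.

Lemma dist_potential u v : dist e u v = d u v.
Proof.
rewrite /dist (eq_find (fun k => within_potential k u v)) find_iota_geq ?subn0 //.
by rewrite add0n potential_lt_card.
Qed.

Lemma max_distant_potential u v :
  max_distant e u v = [forall w, e u w ==> (d v w <= d u v)].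
Proof. by apply: eq_forallb => w; rewrite !dist_potential. Qed.

End DistanceFromPotential.

Section CoverFromMatching.
(* A vertex cover [S] whose vertices are matched, injectively, to vertices
   outside [S] is a minimum vertex cover: every cover must contain one end
   of each matching edge. *)
Variables (T : finType) (g : rel T) (S : {set T}) (mate : T -> T).
Hypothesis S_cover : vertex_cover g S.
Hypothesis mate_edge : {in S, forall x, g x (mate x)}.
Hypothesis mate_out : {in S, forall x, mate x \notin S}.
Hypothesis mate_inj : {in S &, injective mate}.

(* Choosing, for each [x] in [S], an end of the edge [x -- mate x] lying
   in [S'] embeds [S] into any cover [S']. *)
Lemma matching_card_le_cover S' : vertex_cover g S' -> #|S| <= #|S'|.
Proof.
move=> cover'.
pose pick_end x := if x \in S' then x else mate x.
have pick_inj : {in S &, injective pick_end}.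
  move=> x y Sx Sy; rewrite /pick_end.
  case: ifP => _; case: ifP => _ // eq_xy.
  - by have := mate_out Sy; rewrite -eq_xy Sx.
  - by have := mate_out Sx; rewrite eq_xy Sy.
  - exact: mate_inj.
have : pick_end @: S \subset S'.
  apply/subsetP => _ /imsetP [x Sx ->]; rewrite /pick_end; case: ifPn => // notS'x.
  have /forallP /(_ x) /forallP /(_ (mate x)) := cover'.
  by rewrite mate_edge // (negbTE notS'x).
by rewrite -(card_in_imset pick_inj); apply: subset_leq_card.
Qed.

Lemma vertex_cover_number_matching : vertex_cover_number g = #|S|.
Proof.
rewrite /vertex_cover_number; apply/eqP; rewrite eqn_leq; apply/andP; split.
  rewrite -minEnat.
  exact: (Order.TotalTheory.bigmin_le_cond #|T| (fun A : {set T} => #|A|) S_cover).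
apply: (big_ind (fun k => #|S| <= k)) => [|k l|A]; first exact: max_card.
  by rewrite leq_min => -> ->.
exact: matching_card_le_cover.
Qed.

End CoverFromMatching.

Lemma succ_modn p N : p < N -> p.+1 %% N = if p.+1 == N then 0 else p.+1.
Proof. by move=> lt_pN; case: eqP => [->|ne]; [rewrite modnn | rewrite modn_small; lia]. Qed.

Section EvenChainCycle.
Variables (m : nat) (n : nat -> nat).
Hypothesis m_ge2 : 2 <= m.
Hypothesis n_even : forall i, i < m -> 4 <= n i /\ ~~ odd (n i).

Definition diam c := (n c)./2.

Lemma cycle_diam c : c < m -> n c = diam c + diam c /\ 2 <= diam c.
Proof.
move=> /n_even [n_ge4 n_ev]; have := halfK (n c).
by rewrite (negbTE n_ev) subn0 -addnn /diam; lia.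
Qed.

(* [offset c] is the distance from the origin [(0,0)] to the entry of cycle [c]. *)
Definition offset c := \sum_(0 <= k < c) diam k.

Lemma offsetS c : offset c.+1 = offset c + diam c.
Proof. by rewrite /offset big_nat_recr. Qed.

Lemma offset_exit c c' : c < c' -> offset c + diam c <= offset c'.
Proof.
by move=> lt_cc'; rewrite -offsetS /offset (big_cat_nat (leq0n c.+1) lt_cc') leq_addr.
Qed.

(* The explicit distance formula: on one cycle the cyclic distance, between
   different cycles the difference of the distances to the origin. *)
Definition gap a b := (a - b) + (b - a).
Definition depth c p := minn p (n c - p).
Definition spine (x : nat * nat) := offset x.1 + depth x.1 x.2.
Definition cdist (x y : nat * nat) :=
  if x.1 == y.1 then minn (gap x.2 y.2) (n x.1 - gap x.2 y.2)
  else gap (spine x) (spine y).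

Ltac unfold_cdist := rewrite /cdist /spine /depth /gap /=.

Definition in_range (x : nat * nat) := (x.1 < m) && (x.2 < n x.1).
Definition is_rep (x : nat * nat) :=
  in_range x && ~~ ((x.2 == diam x.1) && (x.1.+1 < m)).

Lemma cdist_sym x y : cdist x y = cdist y x.
Proof.
case: x y => [c p] [c' p']; unfold_cdist.
by have [<-|ne] := eqVneq c c'; lia.
Qed.

Lemma cdist_self x : cdist x x = 0.
Proof. by rewrite /cdist eqxx /gap; lia. Qed.

Lemma cdist_repn a y : in_range a -> in_range y -> cdist (repn m n a) y = cdist a y.
Proof.
case: a y => [c p] [c' p'] /andP [/= lt_cm lt_p] /andP [/= lt_c'm lt_p'].
rewrite /repn /=; case: ifP => // /andP [/eqP exit_p lt_c1m].
have [nc d2] := cycle_diam lt_cm; have [nc1 d21] := cycle_diam lt_c1m.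
have [nc' d2'] := cycle_diam lt_c'm; have off1 := offsetS c.
rewrite -/(diam c) in exit_p; unfold_cdist.
have [eq1|ne1] := eqVneq c.+1 c'.
  by subst c'; rewrite (ltn_eqF (ltnSn c)); lia.
have [eq2|ne2] := eqVneq c c'; last lia.
by subst c'; have := offset_exit (ltnSn c); lia.
Qed.

Lemma cdist_cyc_adj a b y : a.1 < m -> cyc_adj n a b -> in_range y ->
  cdist a y <= (cdist b y).+1.
Proof.
case: a b y => [c p] [c2 q] [c' p'] /= lt_cm /and4P [/eqP /= <- lt_p lt_q adj].
move=> /andP [/= lt_c'm lt_p']; move: adj; rewrite /= !succ_modn //.
have [nc _] := cycle_diam lt_cm; have [nc' _] := cycle_diam lt_c'm; unfold_cdist.
by case: (c =P c') => [eq_cc'|ne]; [subst c'|];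
  case: ifP => [/eqP ?|_]; case: ifP => [/eqP ?|_]; lia.
Qed.

Definition raw_nbr U b := exists a, [/\ a.1 < m, cyc_adj n a b & repn m n a = U].

Lemma repn_id U : is_rep U -> repn m n U = U.
Proof. by case/andP => _ /negbTE; rewrite /repn => ->. Qed.

Lemma cyc_adjI c p q : p < n c -> q < n c ->
  q = p.+1 \/ (p.+1 = n c /\ q = 0) \/ p = q.+1 \/ (q.+1 = n c /\ p = 0) ->
  cyc_adj n (c, p) (c, q).
Proof.
move=> lt_p lt_q adj; rewrite /cyc_adj /= eqxx lt_p lt_q /= !succ_modn //.
by case: ifP => ?; case: ifP => ?; lia.
Qed.

Lemma raw_nbr_cycle c p q : is_rep (c, p) -> q < n c ->
  q = p.+1 \/ (p.+1 = n c /\ q = 0) \/ p = q.+1 \/ (q.+1 = n c /\ p = 0) ->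
  raw_nbr (c, p) (c, q).
Proof.
move=> rep lt_q adj; have /andP [/andP [/= lt_cm lt_p] _] := rep.
by exists (c, p); split; [| apply: cyc_adjI | apply: repn_id].
Qed.

Lemma raw_nbr_exit d q : d.+1 < m -> q < n d -> q = (diam d).+1 \/ diam d = q.+1 ->
  raw_nbr (d.+1, 0) (d, q).
Proof.
move=> lt_d1m lt_q adj; have lt_dm : d < m by lia.
have [nd d_ge2] := cycle_diam lt_dm.
exists (d, diam d); split => //; first by apply: cyc_adjI; lia.
by rewrite /repn /= -/(diam d) eqxx lt_d1m.
Qed.

Definition closer_nbr U V := exists b, raw_nbr U b /\ (cdist b V).+1 = cdist U V.

Lemma closer_nbr_later c p c' p' : is_rep (c, p) -> is_rep (c', p') -> c < c' ->
  closer_nbr (c, p) (c', p').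
Proof.
move=> repU /andP [/andP [/= lt_c'm lt_p'] _] lt_cc'.
have /andP [/andP [/= lt_cm lt_p] not_exit] := repU.
have [nc _] := cycle_diam lt_cm; have [nc' _] := cycle_diam lt_c'm.
have off := offset_exit lt_cc'; have ne_cc' : (c == c') = false by lia.
have ne_p : p != diam c by move: not_exit; rewrite -/(diam c); lia.
have [lt_pd|lt_dp] := ltnP p (diam c).
  by exists (c, p.+1); split; [apply: raw_nbr_cycle; lia | unfold_cdist; rewrite ne_cc'; lia].
by exists (c, p.-1); split; [apply: raw_nbr_cycle; lia | unfold_cdist; rewrite ne_cc'; lia].
Qed.

Lemma closer_nbr_earlier c p c' p' : is_rep (c, p) -> is_rep (c', p') -> c' < c ->
  closer_nbr (c, p) (c', p').
Proof.
move=> repU /andP [/andP [/= lt_c'm lt_p'] not_exit'] lt_c'c.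
have /andP [/andP [/= lt_cm lt_p] _] := repU.
have [nc _] := cycle_diam lt_cm; have [nc' _] := cycle_diam lt_c'm.
have off := offset_exit lt_c'c; have ne_cc' : (c == c') = false by lia.
have [p0|p_pos] := posnP p; last first.
  have [le_pd|lt_dp] := leqP p (diam c).
    by exists (c, p.-1); split; [apply: raw_nbr_cycle; lia | unfold_cdist; rewrite ne_cc'; lia].
  exists (c, if p.+1 == n c then 0 else p.+1); split.
    by case: ifP => ?; apply: raw_nbr_cycle; lia.
  by unfold_cdist; rewrite ne_cc'; case: ifP; lia.
(* [U] is the entry of cycle [d+1]: step back from the exit of cycle [d] *)
subst p; have [d eq_c] : exists d, c = d.+1 by exists c.-1; lia.
subst c.
have lt_dm : d < m by lia.
have [nd d_ge2] := cycle_diam lt_dm; have offd := offsetS d.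
have [eq_c'd|ne_c'd] := eqVneq c' d.
- subst c'; have ne_p' : p' != diam d by move: not_exit'; rewrite -/(diam d); lia.
  have [lt_dp'|le_p'd] := ltnP (diam d) p'.
    exists (d, (diam d).+1); split; first by apply: raw_nbr_exit; lia.
    by unfold_cdist; rewrite eqxx ne_cc'; lia.
  exists (d, (diam d).-1); split; first by apply: raw_nbr_exit; lia.
  by unfold_cdist; rewrite eqxx ne_cc'; lia.
- have off' : offset c' + diam c' <= offset d by apply: offset_exit; lia.
  exists (d, (diam d).-1); split; first by apply: raw_nbr_exit; lia.
  by unfold_cdist; rewrite ne_cc' eq_sym (negbTE ne_c'd); lia.
Qed.

Lemma closer_nbr_same c p p' : is_rep (c, p) -> p' < n c -> p != p' ->
  closer_nbr (c, p) (c, p').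
Proof.
move=> repU lt_p' ne_pp'; have /andP [/andP [/= lt_cm lt_p] _] := repU.
have [nc _] := cycle_diam lt_cm.
have [forward|backward] :=
  boolP (((p < p') && (p' - p <= diam c)) || ((p' < p) && (diam c < p - p'))).
  exists (c, if p.+1 == n c then 0 else p.+1); split.
    by case: ifP => ?; apply: raw_nbr_cycle; lia.
  by unfold_cdist; rewrite eqxx; case: ifP; lia.
exists (c, if p == 0 then (n c).-1 else p.-1); split.
  by case: ifP => ?; apply: raw_nbr_cycle; lia.
by unfold_cdist; rewrite eqxx; case: ifP; lia.
Qed.

Lemma closer_nbrP U V : is_rep U -> is_rep V -> U != V -> closer_nbr U V.
Proof.
case: U V => [c p] [c' p'] repU repV ne_UV.
have [lt_cc'|lt_c'c|eq_cc'] := ltngtP c c'.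
- exact: closer_nbr_later.
- exact: closer_nbr_earlier.
- subst c'; have /andP [/andP [_ lt_p'] _] := repV.
  by apply: closer_nbr_same => //; apply: contra_neq ne_UV => ->.
Qed.

(* Conversely, a vertex [U] in the far half of its cycle (or an entry vertex)
   is not maximally distant from a vertex [V] in the far half of its own
   cycle: it has a neighbour strictly farther from [V]. *)
Definition farther_nbr U V := exists b, raw_nbr U b /\ cdist U V < cdist b V.
Definition far_half x := ((x.2 == 0) && (0 < x.1)) || (diam x.1 <= x.2).
Definition strict_far_half x := ((x.2 == 0) && (0 < x.1)) || (diam x.1 < x.2).

Lemma farther_nbr_entry d c' p' : is_rep (d.+1, 0) -> in_range (c', p') ->
  (c', p') != (d.+1, 0) -> farther_nbr (d.+1, 0) (c', p').
Proof.
move=> repU /andP [/= lt_c'm lt_p'] ne_VU; have /andP [/andP [/= lt_d1m _] _] := repU.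
have lt_dm : d < m by lia.
have [nd d_ge2] := cycle_diam lt_dm; have [nc' _] := cycle_diam lt_c'm.
have offd := offsetS d.
have [le_d1c'|lt_c'd1] := leqP d.+1 c'.
- exists (d, (diam d).-1); split; first by apply: raw_nbr_exit; lia.
  have ne_dc' : (d == c') = false by lia.
  have [eq_c'|ne_c'] := eqVneq d.+1 c'.
    subst c'; have p'_pos : p' != 0 by apply: contra_neq ne_VU => ->.
    by unfold_cdist; rewrite ne_dc' eqxx; lia.
  have off' : offset d.+1 + diam d.+1 <= offset c' by apply: offset_exit; lia.
  by unfold_cdist; rewrite ne_dc' (negbTE ne_c'); lia.
- have [nd1 d1_ge2] := cycle_diam lt_d1m; have off' := offset_exit lt_c'd1.
  exists (d.+1, 1); split; first by apply: (raw_nbr_cycle repU); lia.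
  have ne_d1c' : (d.+1 == c') = false by lia.
  by unfold_cdist; rewrite ne_d1c'; lia.
Qed.

Lemma farther_nbr_far c p c' p' : is_rep (c, p) -> is_rep (c', p') ->
  (c, p) != (c', p') -> diam c < p -> far_half (c', p') -> farther_nbr (c, p) (c', p').
Proof.
move=> repU /andP [/andP [/= lt_c'm lt_p'] _] ne_UV lt_dp far_V.
have /andP [/andP [/= lt_cm lt_p] _] := repU.
have [nc _] := cycle_diam lt_cm; have [nc' _] := cycle_diam lt_c'm.
have [lt_cc'|lt_c'c|eq_cc'] := ltngtP c c'.
- have off := offset_exit lt_cc'; have ne_cc' : (c == c') = false by lia.
  exists (c, if p.+1 == n c then 0 else p.+1); split.
    by case: ifP => ?; apply: raw_nbr_cycle; lia.
  by unfold_cdist; rewrite ne_cc'; case: ifP; lia.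
- have off := offset_exit lt_c'c; have ne_cc' : (c == c') = false by lia.
  exists (c, p.-1); split; first by apply: raw_nbr_cycle; lia.
  by unfold_cdist; rewrite ne_cc'; lia.
- subst c'; have ne_pp' : p != p' by apply: contra_neq ne_UV => ->.
  move: far_V; rewrite /far_half /= => far_V.
  have [back|forward] := boolP ((p' == 0) || (p < p')).
    exists (c, p.-1); split; first by apply: raw_nbr_cycle; lia.
    by unfold_cdist; rewrite eqxx; lia.
  exists (c, if p.+1 == n c then 0 else p.+1); split.
    by case: ifP => ?; apply: raw_nbr_cycle; lia.
  by unfold_cdist; rewrite eqxx; case: ifP; lia.
Qed.

Lemma farther_nbrP U V : is_rep U -> is_rep V -> U != V ->
  strict_far_half U -> far_half V -> farther_nbr U V.
Proof.
case: U => [c p] repU repV ne_UV /orP [/andP [/eqP /= p0 c_pos]|/= lt_dp] far_V.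
  subst p; have [d eq_c] : exists d, c = d.+1 by exists c.-1; lia.
  subst c; apply: farther_nbr_entry => //; first by case/andP: repV.
  by rewrite eq_sym.
by case: V repV ne_UV far_V => c' p' repV ne_UV far_V; apply: farther_nbr_far.
Qed.

Definition inner x := ((x.1 == 0) && (x.2 == 0)) || ((0 < x.2) && (x.2 < diam x.1)).
Definition antipode x := if x.2 == 0 then (m.-1, diam m.-1) else (x.1, x.2 + diam x.1).

Lemma antipode_outer U : is_rep U -> inner U -> is_rep (antipode U) && ~~ inner (antipode U).
Proof.
case: U => [c p] /andP [/andP [/= lt_cm lt_p] _] inU.
have [nc d_ge2] := cycle_diam lt_cm.
have lt_m1 : m.-1 < m by lia.
have [nm dm_ge2] := cycle_diam lt_m1.
by move: inU; rewrite /inner /antipode /is_rep /in_range /=; case: ifP => /=; lia.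
Qed.

Lemma antipode_inj U U' : inner U -> inner U' -> antipode U = antipode U' -> U = U'.
Proof.
case: U U' => [c p] [c' p']; rewrite /inner /antipode /=.
case: ifP => /eqP p0; case: ifP => /eqP p0' /= inU inU'.
- by move=> _; congr pair; lia.
- by case=> eq_c' eq_p; subst c'; exfalso; lia.
- by case=> eq_c eq_p; subst c; exfalso; lia.
- by case=> <- eq_p; congr pair; lia.
Qed.

(* Only the entry of a later cycle has coordinates other than itself. *)
Lemma repn_nonentry a U : repn m n a = U -> (U.2 != 0) || (U.1 == 0) -> a = U.
Proof. by rewrite /repn; case: ifP => // _ <-. Qed.

Lemma antipode_far U b : is_rep U -> inner U -> raw_nbr U b ->
  cdist b (antipode U) <= cdist U (antipode U).
Proof.
case: U => [c p] /andP [/andP [/= lt_cm lt_p] _] inU [a [_ adj repn_a]].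
have [nc d_ge2] := cycle_diam lt_cm.
have eq_a : a = (c, p) by apply: (repn_nonentry repn_a); move: inU; rewrite /inner /=; lia.
subst a; case: b adj => c2 q /and4P [/eqP /= <- {c2} _ lt_q _].
case/orP: inU => [/andP [/eqP /= c0 /eqP /= p0]|/andP [/= p_pos lt_pd]].
  subst c p; have lt_m1 : m.-1 < m by lia.
  have [nm dm_ge2] := cycle_diam lt_m1.
  have off : offset 0 + diam 0 <= offset m.-1 by apply: offset_exit; lia.
  have off0 : offset 0 = 0 by rewrite /offset big_geq.
  by rewrite /antipode /=; unfold_cdist; rewrite (ltn_eqF (_ : 0 < m.-1)); lia.
by rewrite /antipode /= (gtn_eqF p_pos); unfold_cdist; rewrite eqxx; lia.
Qed.

Lemma antipode_nbr_far U b : is_rep U -> inner U -> raw_nbr (antipode U) b ->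
  cdist b U <= cdist (antipode U) U.
Proof.
case: U => [c p] /andP [/andP [/= lt_cm lt_p] _] inU [a [_ adj repn_a]].
have [nc d_ge2] := cycle_diam lt_cm; have lt_m1 : m.-1 < m by lia.
have [nm dm_ge2] := cycle_diam lt_m1.
have eq_a : a = antipode (c, p).
  by apply: (repn_nonentry repn_a); rewrite /antipode; case: ifP => /=; lia.
subst a; move: adj; rewrite /antipode /=.
case/orP: inU => [/andP [/eqP /= c0 /eqP /= p0]|/andP [/= p_pos lt_pd]].
- subst c p; rewrite eqxx; case: b => c2 q /and4P [/eqP /= <- {c2} _ lt_q _].
  have off : offset 0 + diam 0 <= offset m.-1 by apply: offset_exit; lia.
  have off0 : offset 0 = 0 by rewrite /offset big_geq.
  by unfold_cdist; rewrite (gtn_eqF (_ : 0 < m.-1)); lia.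
- rewrite (gtn_eqF p_pos); case: b => c2 q /and4P [/eqP /= <- {c2} _ lt_q _].
  by unfold_cdist; rewrite eqxx; lia.
Qed.

Lemma outer_far U : is_rep U -> ~~ inner U ->
  far_half U /\ (strict_far_half U \/ U = (m.-1, diam m.-1)).
Proof.
case: U => [c p] /andP [/andP [/= lt_cm lt_p] not_exit].
rewrite /inner /far_half /strict_far_half /= => outU.
have [nc d_ge2] := cycle_diam lt_cm.
split; first by lia.
have [|not_strict] := boolP (((p == 0) && (0 < c)) || (diam c < p)); first by left.
right; have eq_c : c = m.-1 by move: not_exit; rewrite -/(diam c); lia.
by subst c; congr pair; move: not_exit; rewrite -/(diam m.-1); lia.
Qed.

Definition coord (v : chain_vtx m n) : nat * nat := toN (val v).
Definition vdist (u v : chain_vtx m n) := cdist (coord u) (coord v).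

Lemma coord_rep v : is_rep (coord v).
Proof. by case: v => [[i j] vtx]; rewrite /is_rep /in_range /= ltn_ord. Qed.

Lemma coord_range v : in_range (coord v).
Proof. by case/andP: (coord_rep v). Qed.

Lemma coord_inj : injective coord.
Proof.
move=> [[i j] vi] [[i' j'] vi'] /eqP; rewrite /coord /toN xpair_eqE /= => /andP [eq_i eq_j].
by apply: val_inj; congr pair; apply: val_inj; apply/eqP.
Qed.

Lemma raw_of_range x : in_range x -> exists r : raw_vtx m n, toN r = x.
Proof.
case: x => [c p] /andP [/= lt_cm lt_p].
have lt_pK : p < Kbound m n.
  by apply: leq_trans lt_p _; apply: (@leq_bigmax _ (fun i : 'I_m => n i) (Ordinal lt_cm)).
by exists (Ordinal lt_cm, Ordinal lt_pK).
Qed.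

Lemma coord_onto x : is_rep x -> exists v, coord v = x.
Proof.
move=> rep_x; have /andP [range_x not_exit] := rep_x.
have [r eq_r] := raw_of_range range_x.
have vtx : is_vtx r.
  by move: rep_x; rewrite -eq_r /is_rep /in_range /is_vtx /= => /andP [/andP [_ ->] ->].
by exists (exist _ r vtx).
Qed.

Lemma repn_rep b : in_range b -> is_rep (repn m n b).
Proof.
case: b => [c p] /andP [/= lt_cm lt_p]; rewrite /repn /=; case: ifP => [/andP [_ lt_c1m]|].
  by have [nc1 d_ge2] := cycle_diam lt_c1m; rewrite /is_rep /in_range /=; lia.
by move=> not_exit; rewrite /is_rep /in_range /= lt_cm lt_p /diam not_exit.
Qed.

Lemma cyc_adj_range a b : a.1 < m -> cyc_adj n a b -> in_range a && in_range b.
Proof.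
case: a b => [c p] [c' q] /= lt_cm /and4P [/eqP /= <- lt_p lt_q _].
by rewrite /in_range /= lt_cm lt_p lt_q.
Qed.

Lemma raw_nbr_range U b : raw_nbr U b -> in_range b.
Proof. by case=> a [lt_a adj _]; case/andP: (cyc_adj_range lt_a adj). Qed.

Lemma chain_adjE u w :
  chain_adj u w <-> exists2 b, raw_nbr (coord u) b & repn m n b = coord w.
Proof.
split.
  move=> /existsP [a /existsP [b /and3P [adj /eqP repn_a /eqP repn_b]]].
  by exists (toN b) => //; exists (toN a); rewrite /= ltn_ord.
case=> b [a [lt_a adj repn_a]] repn_b.
have /andP [range_a range_b] := cyc_adj_range lt_a adj.
have [[ra eq_a] [rb eq_b]] := (raw_of_range range_a, raw_of_range range_b).
apply/existsP; exists ra; apply/existsP; exists rb.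
by rewrite eq_a eq_b adj repn_a repn_b !eqxx.
Qed.

Lemma vertex_nbr u w : chain_adj u w ->
  exists2 b, raw_nbr (coord u) b & forall v, vdist w v = cdist b (coord v).
Proof.
case/chain_adjE => b nbr repn_b; exists b => // v.
by rewrite /vdist -repn_b cdist_repn ?coord_range //; apply: raw_nbr_range nbr.
Qed.

Lemma nbr_vertex u b : raw_nbr (coord u) b ->
  exists2 w, chain_adj u w & forall v, vdist w v = cdist b (coord v).
Proof.
move=> nbr; have [w eq_w] := coord_onto (repn_rep (raw_nbr_range nbr)).
exists w; first by apply/chain_adjE; exists b.
by move=> v; rewrite /vdist eq_w cdist_repn ?coord_range //; apply: raw_nbr_range nbr.
Qed.

Lemma vdist_step u w v : chain_adj u w -> vdist u v <= (vdist w v).+1.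
Proof.
case/vertex_nbr => b [a [lt_a adj repn_a]] ->.
have /andP [range_a _] := cyc_adj_range lt_a adj.
by rewrite /vdist -repn_a cdist_repn ?coord_range //; apply: cdist_cyc_adj (coord_range v).
Qed.

Lemma vdist_descent u v : u != v -> exists2 w, chain_adj u w & (vdist w v).+1 = vdist u v.
Proof.
move=> ne_uv; have ne_coord : coord u != coord v by rewrite (inj_eq coord_inj).
have [b [nbr closer]] := closer_nbrP (coord_rep u) (coord_rep v) ne_coord.
by have [w adj dist_w] := nbr_vertex nbr; exists w; rewrite // dist_w.
Qed.

Lemma max_distant_chain u v :
  max_distant (@chain_adj m n) u v = [forall w, chain_adj u w ==> (vdist v w <= vdist u v)].
Proof.
apply: max_distant_potential => [x|x y z|x y]; first exact: cdist_self.
  exact: vdist_step.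
exact: vdist_descent.
Qed.

Local Notation SR := (strong_resolving_graph (@chain_adj m n)).

Lemma vdist_sym u v : vdist u v = vdist v u.
Proof. exact: cdist_sym. Qed.

Lemma antipode_SR x y : inner (coord x) -> coord y = antipode (coord x) -> SR x y.
Proof.
move=> in_x coord_y; have /andP [_ out_y] := antipode_outer (coord_rep x) in_x.
rewrite /strong_resolving_graph /mutually_max_distant !max_distant_chain.
apply/and3P; split.
- by apply: contraNneq out_y => eq_xy; rewrite -coord_y -eq_xy.
- apply/forallP => w; apply/implyP => /vertex_nbr [b nbr dist_w].
  by rewrite vdist_sym dist_w /vdist coord_y; apply: antipode_far (coord_rep x) in_x nbr.
- apply/forallP => w; apply/implyP => /vertex_nbr [b nbr dist_w].
  rewrite vdist_sym dist_w /vdist coord_y; rewrite coord_y in nbr.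
  exact: antipode_nbr_far (coord_rep x) in_x nbr.
Qed.

(* Two non-inner vertices are never mutually maximally distant: one of them
   lies in the strict far half and has a neighbour farther from the other. *)
Lemma not_max_distant u v : u != v -> strict_far_half (coord u) -> far_half (coord v) ->
  ~~ max_distant (@chain_adj m n) u v.
Proof.
move=> ne_uv far_u far_v; have ne_coord : coord u != coord v by rewrite (inj_eq coord_inj).
have [b [nbr farther]] := farther_nbrP (coord_rep u) (coord_rep v) ne_coord far_u far_v.
have [w adj dist_w] := nbr_vertex nbr.
rewrite max_distant_chain negb_forall; apply/existsP; exists w.
by rewrite adj /= -ltnNge [vdist v w]vdist_sym dist_w.
Qed.

Lemma outer_not_SR x y : ~~ inner (coord x) -> ~~ inner (coord y) -> ~~ SR x y.
Proof.
move=> out_x out_y; rewrite /strong_resolving_graph /mutually_max_distant.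
have [->|ne_xy] := eqVneq x y => //=.
have [far_x [strict_x|end_x]] := outer_far (coord_rep x) out_x;
have [far_y [strict_y|end_y]] := outer_far (coord_rep y) out_y.
- by rewrite negb_and not_max_distant.
- by rewrite negb_and not_max_distant.
- by rewrite negb_and orbC not_max_distant // eq_sym.
- by move: ne_xy; rewrite -(inj_eq coord_inj) end_x end_y eqxx.
Qed.

Definition inner_set := [set v | inner (coord v)].
Definition mate v := odflt v [pick w | coord w == antipode (coord v)].

Lemma coord_mate v : inner (coord v) -> coord (mate v) = antipode (coord v).
Proof.
move=> in_v; rewrite /mate; case: pickP => [w /eqP //|no_w].
have /andP [rep_a _] := antipode_outer (coord_rep v) in_v.
by have [w eq_w] := coord_onto rep_a; move: (no_w w); rewrite eq_w eqxx.
Qed.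

Lemma inner_cover : vertex_cover SR inner_set.
Proof.
apply/forallP => x; apply/forallP => y; apply/implyP => sr_xy; rewrite !inE.
by apply: contraLR sr_xy; rewrite negb_or => /andP [out_x out_y]; apply: outer_not_SR.
Qed.

Lemma mate_SR : {in inner_set, forall x, SR x (mate x)}.
Proof. by move=> x; rewrite inE => in_x; apply: antipode_SR (coord_mate in_x). Qed.

Lemma mate_outer : {in inner_set, forall x, mate x \notin inner_set}.
Proof.
move=> x; rewrite !inE => in_x; rewrite coord_mate //.
by case/andP: (antipode_outer (coord_rep x) in_x).
Qed.

Lemma mate_inj : {in inner_set &, injective mate}.
Proof.
move=> x y; rewrite !inE => in_x in_y eq_mate; apply: coord_inj.
by apply: (antipode_inj in_x in_y); rewrite -(coord_mate in_x) -(coord_mate in_y) eq_mate.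
Qed.

Definition inner_seq := (0, 0) :: [seq (c, p) | c <- iota 0 m, p <- iota 1 (diam c).-1].

Lemma mem_inner_seq x : is_rep x -> (x \in inner_seq) = inner x.
Proof.
case: x => [c p] /andP [/andP [/= lt_cm lt_p] _]; have [nc d_ge2] := cycle_diam lt_cm.
rewrite inE xpair_eqE /inner /=; apply/idP/idP.
  case/orP => [-> //|/allpairsPdep [c' [p' [_ mem_p' [eq_c eq_p]]]]].
  by subst c' p'; move: mem_p'; rewrite mem_iota; lia.
case/orP => [-> //|/andP [p_pos lt_pd]]; apply/orP; right.
by apply/allpairsPdep; exists c, p; rewrite !mem_iota; split => //; lia.
Qed.

Lemma inner_seq_rep x : x \in inner_seq -> is_rep x.
Proof.
rewrite inE => /orP [/eqP ->|/allpairsPdep [c [p [mem_c mem_p ->]]]].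
  have lt_0m : 0 < m by lia.
  by have [n0 d_ge2] := cycle_diam lt_0m; rewrite /is_rep /in_range /=; lia.
move: mem_c mem_p; rewrite !mem_iota => mem_c mem_p.
have lt_cm : c < m by lia.
by have [nc d_ge2] := cycle_diam lt_cm; rewrite /is_rep /in_range /=; lia.
Qed.

Lemma uniq_inner_seq : uniq inner_seq.
Proof.
rewrite cons_uniq; apply/andP; split.
  apply/negP => /allpairsPdep [c [p [_ mem_p [_ p0]]]].
  by move: mem_p; rewrite -p0 mem_iota.
apply: allpairs_uniq_dep => [||[c p] [c' p'] _ _ /= [-> ->] //]; first exact: iota_uniq.
by move=> c _; apply: iota_uniq.
Qed.

Lemma card_inner_set : #|inner_set| = 1 + \sum_(i < m) (n i - 2) %/ 2.
Proof.
have perm_coord : perm_eq (map coord (enum inner_set)) inner_seq.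
  apply: uniq_perm; first by rewrite map_inj_uniq ?enum_uniq //; apply: coord_inj.
    exact: uniq_inner_seq.
  move=> x; apply/mapP/idP.
    by case=> v; rewrite mem_enum inE => in_v ->; rewrite mem_inner_seq // coord_rep.
  move=> mem_x; have [v eq_v] := coord_onto (inner_seq_rep mem_x).
  by exists v; rewrite // mem_enum inE eq_v -mem_inner_seq // inner_seq_rep.
rewrite cardE -(size_map coord) (perm_size perm_coord) /= size_allpairs_dep add1n.
congr S; rewrite sumnE big_map -{1}(subn0 m) -/(index_iota 0 m) big_mkord.
apply: eq_bigr => i _; rewrite size_iota.
by have [ni d_ge2] := cycle_diam (ltn_ord i); rewrite /diam in ni d_ge2 *; lia.
Qed.

End EvenChainCycle.

Theorem lemma3p4 (m : nat) (n : nat -> nat) :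
  2 <= m ->
  (forall i, i < m -> 4 <= n i /\ ~~ odd (n i)) ->
  vertex_cover_number (strong_resolving_graph (@chain_adj m n))
  = 1 + \sum_(i < m) (n i - 2) %/ 2.
Proof.
move=> m_ge2 n_even; rewrite -(card_inner_set m_ge2 n_even).
apply: vertex_cover_number_matching.
- exact: inner_cover.
- exact: mate_SR.
- exact: mate_outer.
- exact: mate_inj.
Qed.
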